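(* Let $S$ be a right non-degenerate semigroup of skew type. Then $S$ satisfies the ascending chain condition on right ideals.
   Context: A semigroup of skew type is a monoid $S$ with a monoid presentation $S=\langle x_1,\ldots,x_n \mid x_ix_j=x_kx_l\rangle$ consisting of $\binom{n}{2}$ relations, each of the form $x_ix_j=x_kx_l$ with $i\neq j$, $k\neq l$, such that every word $x_px_q$ with $p\neq q$ appears (as one side) in exactly one of the relations; $X=\{x_1,\ldots,x_n\}$. For $a,b\in X$, the partner of $ab$ is the other side of the unique defining relation containing $ab$ if $a\neq b$, and $ab$ itself if $a=b$. $S$ is right non-degenerate if for every $x\in X$ the map $X\to X$ sending $y$ to the first letter of the partner of $xy$ is surjective. *)

From mathcomp Require Import all_boot.
From Stdlib Require Import Relations.Relation_Operators.
Set Implicit Arguments. Unset Strict Implicit. Unset Printing Implicit Defensive.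

(* Generators x_1..x_n are represented by 'I_n; words of the free monoid on X
   by seq 'I_n.  The defining relations are encoded by a function
   r : 'I_n -> 'I_n -> 'I_n * 'I_n : for i != j, the relation containing the
   word x_i x_j is  x_i x_j = x_k x_l  with (k,l) = r i j.  Values on the
   diagonal are irrelevant. *)

Definition rel_data (n : nat) := 'I_n -> 'I_n -> 'I_n * 'I_n.

(* Skew type: the relations form a set of unordered pairs {x_ix_j, x_kx_l}
   of distinct words with i<>j, k<>l, such that every word x_px_q (p<>q)
   lies in exactly one relation. *)
Definition skew_type (n : nat) (r : rel_data n) : Prop :=
  forall i j : 'I_n, i != j ->
    [/\ (r i j).1 != (r i j).2, r i j != (i, j) & r (r i j).1 (r i j).2 = (i, j)].

Definition partner (n : nat) (r : rel_data n) (a b : 'I_n) : 'I_n * 'I_n :=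
  if a == b then (a, a) else r a b.

Definition right_nondegenerate (n : nat) (r : rel_data n) : Prop :=
  forall x : 'I_n, forall z : 'I_n, exists y : 'I_n, (partner r x y).1 = z.

Inductive rstep (n : nat) (r : rel_data n) : seq 'I_n -> seq 'I_n -> Prop :=
| RStep (u v : seq 'I_n) (i j : 'I_n) : i != j ->
    rstep r (u ++ [:: i; j] ++ v) (u ++ [:: (r i j).1; (r i j).2] ++ v).

(* the congruence on the free monoid generated by the relations; S is the
   quotient of seq 'I_n by this congruence *)
Definition sequiv (n : nat) (r : rel_data n) : seq 'I_n -> seq 'I_n -> Prop :=
  clos_refl_sym_trans (seq 'I_n) (@rstep n r).

(* subsets of S, represented as congruence-saturated predicates on words *)
Definition saturated (n : nat) (r : rel_data n) (I : seq 'I_n -> Prop) : Prop :=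
  forall w w', sequiv r w w' -> I w -> I w'.

Definition right_ideal (n : nat) (r : rel_data n) (I : seq 'I_n -> Prop) : Prop :=
  saturated r I /\ forall w s, I w -> I (w ++ s).

Definition acc_right_ideals (n : nat) (r : rel_data n) : Prop :=
  forall I : nat -> seq 'I_n -> Prop,
    (forall k, right_ideal r (I k)) ->
    (forall k w, I k w -> I k.+1 w) ->
    exists N, forall m, N <= m -> forall w, I m w <-> I N w.

From Stdlib Require Import Classical IndefiniteDescription.
From mathcomp Require Import all_boot.
From Stdlib Require Import Relations.Relation_Operators.
Set Implicit Arguments. Unset Strict Implicit. Unset Printing Implicit Defensive.

(* ACC on right ideals follows once every sequence (w_k) of words has i < j
   with w_j in w_i S, i.e. once "u is a prefix of w in S" is a well-quasi-order.
   Right non-degeneracy makes every sigma_x (y |-> first letter of the partner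
   of xy) a permutation, so pushing a letter c leftwards through a word t gives
   t c = sigma_t(c) e in S with sigma_t a permutation. Take a minimal bad
   sequence g_k = v_k c_k (Nash-Williams): every subsequence of (v_k) is good,
   so along a subsequence with constant last letter c there is an ascending
   chain v_{k_0} <= v_{k_1} <= ... Two of the finitely many permutations sigma
   attached to the initial segments of this chain coincide, so some segment t
   of it satisfies sigma_t(c) = c, whence v_{k_a} c <= v_{k_a} t c = v_{k_b} c,
   contradicting badness. *)

Lemma finite_pigeonhole (T : finType) (f : nat -> T) :
  exists i j, i < j /\ f i = f j.
Proof.
have /injectivePn[i [j neq_ij eq_fij]] : ~~ injectiveb (fun i : 'I_#|T|.+1 => f i).
  by apply/injectiveP => /leq_card; rewrite card_ord ltnn.
by case: (ltngtP i j) neq_ij => [lt_ij|lt_ji|/val_inj->]; rewrite ?eqxx //;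
  [exists i, j | exists j, i].
Qed.

Lemma ex_minimizer (A : Type) (P : A -> Prop) (m : A -> nat) :
  (exists a, P a) -> exists a, P a /\ forall b, P b -> m a <= m b.
Proof.
move=> [a Pa]; have : exists2 b, P b & m b = m a by exists a.
elim/ltn_ind: (m a) => k IH [b Pb mb_k]; rewrite -mb_k in IH.
case: (classic (exists2 c, P c & m c < m b)) => [[c Pc lt_cb] | no_smaller].
  exact: IH lt_cb (ex_intro2 _ _ c Pc erefl).
exists b; split=> // c Pc; rewrite leqNgt; apply/negP => lt_cb.
by apply: no_smaller; exists c.
Qed.

Section BadSequences.

Variables (T : Type) (R : T -> T -> Prop).

Definition good (f : nat -> T) := exists i j, i < j /\ R (f i) (f j).

Definition agree_below (f g : nat -> T) k := forall i, i < k -> f i = g i.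

Lemma good_subsequences_chain (h : nat -> T) :
  (forall psi, {homo psi : i j / i < j} -> good (h \o psi)) ->
  exists2 J : nat -> nat, {homo J : i j / i < j} & forall l, R (h (J l)) (h (J l.+1)).
Proof.
move=> good_h.
have [N HN] : exists N, forall i, N <= i -> exists2 j, i < j & R (h i) (h j).
  apply: NNPP => no_N.
  have dead_after N : exists i, N <= i /\ forall j, i < j -> ~ R (h i) (h j).
    apply: NNPP => no_dead; apply: no_N; exists N => i le_Ni.
    apply: NNPP => no_succ; apply: no_dead.
    by exists i; split=> // j lt_ij R_ij; apply: no_succ; exists j.
  have [dead deadP] := functional_choice _ dead_after.
  pose phi i := iter i.+1 (fun k => dead k.+1) 0.
  have phi_homo : {homo phi : i j / i < j}.
    exact: (homo_ltn ltn_trans (fun i => (deadP _).1)).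
  have [i [j [lt_ij R_ij]]] := good_h phi phi_homo.
  exact: (deadP _).2 _ (phi_homo _ _ lt_ij) R_ij.
have succ i : exists j, i < j /\ (N <= i -> R (h i) (h j)).
  case: (leqP N i) => [/HN[j lt_ij R_ij] | lt_iN]; first by exists j.
  by exists i.+1; split=> // /(leq_trans lt_iN); rewrite ltnn.
have [next nextP] := functional_choice _ succ.
pose J l := iter l next N.
have le_NJ l : N <= J l.
  by elim: l => //= l IH; exact: ltnW (leq_ltn_trans IH (nextP _).1).
exists J; first exact: (homo_ltn ltn_trans (fun l => (nextP _).1)).
by move=> l; apply: (nextP _).2 (le_NJ l).
Qed.

Section MinimalBad.

Variable mu : T -> nat.

Definition minimal_bad (g : nat -> T) :=
  ~ good g /\
  forall k f, ~ good f -> agree_below f g k -> mu (g k) <= mu (f k).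

Lemma minimal_extension (h : nat -> T) k : exists f, ~ good h ->
  [/\ ~ good f, agree_below f h k &
      forall f', ~ good f' -> agree_below f' h k -> mu (f k) <= mu (f' k)].
Proof.
case: (classic (good h)) => [|bad_h]; first by exists h.
have [|f [[bad_f agree_f] min_f]] :=
  @ex_minimizer _ (fun f => ~ good f /\ agree_below f h k) (fun f => mu (f k)).
  by exists h.
by exists f => _; split=> // f' bad_f' agree_f'; apply: min_f.
Qed.

Lemma exists_minimal_bad f0 : ~ good f0 -> exists g, minimal_bad g.
Proof.
move=> bad_f0.
have [step stepP] := functional_choice _
  (fun h => functional_choice _ (minimal_extension h)).
pose fix G k := step (if k is k'.+1 then G k' else f0) k.
pose prev k := if k is k'.+1 then G k' else f0.
have G_bad k : ~ good (G k).
  by elim: k => [|k IH]; [case: (stepP f0 0 bad_f0) | case: (stepP _ k.+1 IH)].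
have G_stepP k : agree_below (G k) (prev k) k /\
    forall f, ~ good f -> agree_below f (prev k) k -> mu (G k k) <= mu (f k).
  by have := stepP (prev k) k; case: k => [|k] /= /(_ _)[].
have G_agree k i : i <= k -> G k i = G i i.
  elim: k => [|k IH]; first by rewrite leqn0 => /eqP->.
  rewrite leq_eqVlt => /orP[/eqP-> // | lt_ik].
  by case: (G_stepP k.+1) => agree_G _; rewrite -IH //; exact: agree_G.
exists (fun i => G i i); split.
  move=> [i [j [lt_ij R_ij]]]; apply: (G_bad j); exists i, j; split=> //.
  by rewrite G_agree // ltnW.
move=> k f bad_f agree_f; case: (G_stepP k) => _; apply=> // i lt_ik.
rewrite agree_f //; case: k lt_ik {agree_f} => // k lt_ik.
exact/esym/G_agree.
Qed.

End MinimalBad.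

Hypothesis R_trans : forall x y z, R x y -> R y z -> R x z.

Lemma minimal_bad_smaller_good mu (g v : nat -> T) :
  minimal_bad mu g -> (forall k, R (v k) (g k) /\ mu (v k) < mu (g k)) ->
  forall psi, {homo psi : i j / i < j} -> good (v \o psi).
Proof.
move=> [bad_g min_g] v_below psi psi_homo; apply: NNPP => bad_v.
have le_psi0 j : psi 0 <= psi j by case: j => // j; exact/ltnW/psi_homo.
pose f i := if i < psi 0 then g i else v (psi (i - psi 0)).
have bad_f : ~ good f.
  move=> [i [j [lt_ij]]]; rewrite /f.
  case: ifP => lt_i; case: ifP => lt_j R_ij.
  - by apply: bad_g; exists i, j.
  - apply: bad_g; exists i, (psi (j - psi 0)); split.
      exact: leq_trans lt_i (le_psi0 _).
    exact: R_trans R_ij (v_below _).1.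
  - by move: (ltn_trans lt_ij lt_j); rewrite lt_i.
  - apply: bad_v; exists (i - psi 0), (j - psi 0); split=> //.
    by rewrite ltn_sub2r // (leq_ltn_trans _ lt_ij) // leqNgt lt_i.
have := min_g (psi 0) f bad_f (fun i lt_i => ltac:(by rewrite /f lt_i)).
by rewrite /f ltnn subnn leqNgt (v_below _).2.
Qed.

End BadSequences.

Lemma constant_subsequence (U : finType) (f : nat -> U) :
  exists x, exists2 e : nat -> nat, {homo e : i j / i < j} & forall i, f (e i) = x.
Proof.
have [e e_homo e_eq] :=
  @good_subsequences_chain _ eq f (fun psi _ => finite_pigeonhole (f \o psi)).
exists (f (e 0)), e => // i; elim: i => // i <-; exact/esym/e_eq.
Qed.

Section Words.

Variables (n : nat) (r : rel_data n).

Notation word := (seq 'I_n).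

Lemma sequiv_refl w : sequiv r w w. Proof. exact: rst_refl. Qed.

Lemma sequiv_sym u w : sequiv r u w -> sequiv r w u. Proof. exact: rst_sym. Qed.

Lemma sequiv_trans u v w : sequiv r u v -> sequiv r v w -> sequiv r u w.
Proof. exact: rst_trans. Qed.

Lemma sequiv_catr a b t : sequiv r a b -> sequiv r (a ++ t) (b ++ t).
Proof.
elim=> [_ _ [u v i j neq_ij] | a' | a' b' _ IH | a' b' c' _ IH1 _ IH2].
- by apply: rst_step; rewrite -!catA; exact: RStep.
- exact: sequiv_refl.
- exact: sequiv_sym.
- exact: sequiv_trans IH1 IH2.
Qed.

Lemma sequiv_catl p a b : sequiv r a b -> sequiv r (p ++ a) (p ++ b).
Proof.
elim=> [_ _ [u v i j neq_ij] | a' | a' b' _ IH | a' b' c' _ IH1 _ IH2].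
- by apply: rst_step; move: (RStep r (p ++ u) v neq_ij); rewrite -!catA.
- exact: sequiv_refl.
- exact: sequiv_sym.
- exact: sequiv_trans IH1 IH2.
Qed.

Definition sprefix (u w : word) := exists t, sequiv r (u ++ t) w.

Lemma sprefix_trans u v w : sprefix u v -> sprefix v w -> sprefix u w.
Proof.
move=> [t uv] [t' vw]; exists (t ++ t'); rewrite catA.
exact: sequiv_trans (sequiv_catr t' uv) vw.
Qed.

Lemma sprefix_rcons u x : sprefix u (rcons u x).
Proof. by exists [:: x]; rewrite cats1; apply: sequiv_refl. Qed.

Lemma right_ideal_sprefix I u w : right_ideal r I -> sprefix u w -> I u -> I w.
Proof. by move=> [sat_I ideal_I] [t uw] /(ideal_I _ t); apply: sat_I. Qed.

Definition sigma (x y : 'I_n) := (partner r x y).1.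

Definition sigmaw (t : word) (c : 'I_n) := foldr sigma c t.

Lemma sequiv_partner x y e :
  sequiv r [:: x, y & e] [:: (partner r x y).1, (partner r x y).2 & e].
Proof.
rewrite /partner; case: eqP => [-> | /eqP neq_xy]; first exact: sequiv_refl.
by apply: rst_step; exact: (RStep r [::] e neq_xy).
Qed.

Lemma sequiv_rcons_sigmaw t c : exists e, sequiv r (rcons t c) (sigmaw t c :: e).
Proof.
elim: t => [|x t [e IH]] /=; first by exists [::]; apply: sequiv_refl.
exists ((partner r x (sigmaw t c)).2 :: e).
exact: sequiv_trans (sequiv_catl [:: x] IH) (sequiv_partner _ _ _).
Qed.

Lemma acc_right_ideals_of_good : (forall f, good sprefix f) -> acc_right_ideals r.
Proof.
move=> good_sprefix I ideal_I incr_I; apply: NNPP => no_N.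
have mono_I k m w : k <= m -> I k w -> I m w.
  by move/subnKC<-; elim: (m - k) => [|d IH]; rewrite ?addn0 // addnS => /IH/incr_I.
have new_elt N : exists mw : nat * word, [/\ N <= mw.1, I mw.1 mw.2 & ~ I N mw.2].
  apply: NNPP => no_new; apply: no_N; exists N => m le_Nm w; split; last exact: mono_I.
  by move=> Imw; apply: NNPP => not_INw; apply: no_new; exists (m, w).
have [ch chP] := functional_choice _ new_elt.
pose M k := iter k (fun N => (ch N).1) 0.
pose w k := (ch (M k)).2.
have [i [j [lt_ij /right_ideal_sprefix Iwj]]] := good_sprefix w.
have M_mono : {homo M : k m / k <= m}.
  by apply: homo_leq leq_trans _ => k; case: (chP (M k)).
case: (chP (M j)) => _ _; apply; apply: Iwj (ideal_I _) _.
by apply: mono_I (M_mono _ _ lt_ij) _; case: (chP (M i)).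
Qed.

Hypothesis rnd : right_nondegenerate r.

Lemma sigma_inj x : injective (sigma x).
Proof.
have sigma_onto z : exists y, sigma x y == z by have [y /eqP] := rnd x z; exists y.
pose sigma_inv z := xchoose (sigma_onto z).
have sigma_invK : cancel sigma_inv (sigma x).
  by move=> z; apply/eqP/(xchooseP (sigma_onto z)).
exact: can_inj (canF_sym sigma_invK).
Qed.

Lemma sigmaw_inj t : injective (sigmaw t).
Proof. by elim: t => //= x t IH a b /sigma_inj /IH. Qed.

Lemma sprefix_chain_rcons (u : nat -> word) c :
  (forall l, sprefix (u l) (u l.+1)) ->
  exists a b, a < b /\ sprefix (rcons (u a) c) (rcons (u b) c).
Proof.
move=> /functional_choice[t ut].
pose tw a b := \big[cat/[::]]_(a <= i < b) t i.
have u_tw a b : a <= b -> sequiv r (u a ++ tw a b) (u b).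
  move/subnKC<-; elim: (b - a) => [|k IH].
    by rewrite addn0 /tw big_geq ?cats0 //; apply: sequiv_refl.
  rewrite addnS /tw big_nat_recr ?leq_addr //= catA.
  exact: sequiv_trans (sequiv_catr _ IH) (ut _).
have [a [b [lt_ab eq_ab]]] :=
  finite_pigeonhole (fun l => [ffun y => sigmaw (tw 0 l) y]).
have fix_c : sigmaw (tw a b) c = c.
  apply: (@sigmaw_inj (tw 0 a)); move/ffunP/(_ c): eq_ab; rewrite !ffunE.
  by rewrite /tw (big_cat_nat (leq0n a) (ltnW lt_ab)) /sigmaw foldr_cat.
have [e He] := sequiv_rcons_sigmaw (tw a b) c; rewrite fix_c in He.
exists a, b; split=> //; exists e; rewrite cat_rcons.
apply: sequiv_trans (sequiv_catl _ (sequiv_sym He)) _.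
by rewrite -rcons_cat -!cats1; apply/sequiv_catr/u_tw/ltnW.
Qed.

Theorem good_sprefix (f : nat -> word) : good sprefix f.
Proof.
apply: NNPP => bad_f.
have [g [bad_g min_g]] := exists_minimal_bad size bad_f.
have g_rcons k : exists vc : word * 'I_n, g k = rcons vc.1 vc.2.
  case/lastP E: (g k) => [|v x]; last by exists (v, x).
  exfalso; apply: bad_g; exists k, k.+1; split=> //.
  by rewrite E; exists (g k.+1); apply: sequiv_refl.
have [vc gE] := functional_choice _ g_rcons.
pose v k := (vc k).1.
have v_good : forall psi, {homo psi : i j / i < j} -> good sprefix (v \o psi).
  apply: (minimal_bad_smaller_good (@sprefix_trans) (conj bad_g min_g)) => k.
  by rewrite gE size_rcons; split=> //; apply: sprefix_rcons.
have [c [e e_homo e_c]] := constant_subsequence (fun k => (vc k).2).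
have [J J_homo chain] : exists2 J : nat -> nat, {homo J : i j / i < j} &
    forall l, sprefix (v (e (J l))) (v (e (J l.+1))).
  apply: (@good_subsequences_chain _ sprefix (v \o e)) => psi psi_homo.
  by apply: (v_good (e \o psi)) => i j /psi_homo/e_homo.
have [a [b [lt_ab pre_ab]]] := sprefix_chain_rcons c chain.
apply: bad_g; exists (e (J a)), (e (J b)); split; first exact/e_homo/J_homo.
by rewrite !gE !e_c.
Qed.

End Words.

Theorem proposition4p2 (n : nat) (r : rel_data n) :
  skew_type r -> right_nondegenerate r -> acc_right_ideals r.
Proof.
move=> _ rnd; apply: acc_right_ideals_of_good; exact: good_sprefix.
Qed.
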